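(* For every $n\equiv 13 \pmod{16}$ (with $n\geq 13$), there exists an almost 2-perfect maximum 8-cycle packing of $K_n$.
   Context: An 8-cycle packing of $K_n$ on vertex set $\mathcal{X}$ is a triple $(\mathcal{X},\mathcal{C},\mathcal{L})$ with $\mathcal{C}$ a collection of pairwise edge-disjoint 8-cycles of $K_n$ and leave $\mathcal{L}$ the set of edges in no cycle of $\mathcal{C}$; it is maximum if $|\mathcal{L}|$ is minimum among all 8-cycle packings of $K_n$. For an 8-cycle $C$, an inside 8-cycle of $C$ is an 8-cycle on the same vertex set sharing no edge with $C$. The packing is almost 2-perfect if one can choose for each $C\in\mathcal{C}$ an inside 8-cycle $C'$ such that $(\mathcal{X},\{C'\},\mathcal{L})$ is again an 8-cycle packing with the same leave. *)

From mathcomp Require Import all_boot.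
Set Implicit Arguments. Unset Strict Implicit. Unset Printing Implicit Defensive.

(* Vertices of K_n: 'I_n.  Edges: 2-element subsets of 'I_n.
   An edge set (graph) is a {set {set 'I_n}}. *)
Definition edge_set (n : nat) : Type := {set {set 'I_n}}.

Definition Kn_edges (n : nat) : edge_set n := [set e : {set 'I_n} | #|e| == 2].

(* The edge set of the closed walk v 0, v 1, ..., v 7, v 0. *)
Definition cycle8_edges (n : nat) (v : 'I_8 -> 'I_n) : edge_set n :=
  [set [set v i; v (ordS i)] | i : 'I_8].

Definition is_8cycle (n : nat) (C : edge_set n) : Prop :=
  exists v : 'I_8 -> 'I_n, injective v /\ C = cycle8_edges v.

Definition vertices (n : nat) (C : edge_set n) : {set 'I_n} :=
  \bigcup_(e in C) e.

Definition is_8packing (n : nat) (P : {set edge_set n}) : Prop :=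
  (forall C, C \in P -> is_8cycle C) /\
  (forall C1 C2, C1 \in P -> C2 \in P -> C1 != C2 -> [disjoint C1 & C2]).

Definition leave (n : nat) (P : {set edge_set n}) : edge_set n :=
  Kn_edges n :\: \bigcup_(C in P) C.

Definition is_max_8packing (n : nat) (P : {set edge_set n}) : Prop :=
  is_8packing P /\
  (forall Q : {set edge_set n}, is_8packing Q -> #|leave P| <= #|leave Q|).

Definition inside_8cycle (n : nat) (C C' : edge_set n) : Prop :=
  is_8cycle C' /\ vertices C' = vertices C /\ [disjoint C & C'].

Definition almost_2perfect (n : nat) (P : {set edge_set n}) : Prop :=
  exists f : edge_set n -> edge_set n,
    (forall C, C \in P -> inside_8cycle C (f C)) /\
    (forall C1 C2, C1 \in P -> C2 \in P -> C1 != C2 -> [disjoint f C1 & f C2]) /\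
    is_8packing (f @: P) /\
    leave (f @: P) = leave P.

From mathcomp Require Import all_boot zify.
Set Implicit Arguments. Unset Strict Implicit. Unset Printing Implicit Defensive.

(* Write n = 16k + 13 and split the vertices other than 0 into 4k + 3 blocks of four.
   Vertex 0 with blocks 0-2 spans a K_13, and vertex 0 with each later run of four blocks
   spans a K_17; every other edge joins two blocks of different runs and so lies in a
   K_{4,4}.  K_17 and K_{4,4} decompose into 8-cycles and K_13 into nine 8-cycles plus
   six edges, and each of these decompositions has a twin whose i-th cycle is an inside
   8-cycle of the i-th cycle of the original.  Gluing the pieces gives a packing with a
   leave of six edges, which is optimal because C(n, 2) = 6 (mod 8), and the twins
   witness almost 2-perfection. *)

Definition same_edge (T : Type) (a b c d : T) : Prop := (a = c /\ b = d) \/ (a = d /\ b = c).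

Lemma eq_set2P (T : finType) (a b c d : T) :
  reflect (same_edge a b c d) ([set a; b] == [set c; d]).
Proof.
apply: (iffP eqP) => [E|[[-> ->]|[-> ->]]]; [|by []|by rewrite setUC].
have /set2P[] : a \in [set c; d] by rewrite -E set21.
all: have /set2P[] : b \in [set c; d] by rewrite -E set22.
all: have /set2P[] : c \in [set a; b] by rewrite E set21.
all: have /set2P[] : d \in [set a; b] by rewrite E set22.
all: by move=> *; subst; first [by left | by right].
Qed.

Lemma same_edge_sym (T : Type) (a b c d : T) : same_edge a b c d -> same_edge c d a b.
Proof. by case=> [[-> ->]|[-> ->]]; [left|right]. Qed.

Lemma same_edge_map (T U : Type) (f : T -> U) (a b c d : T) :
  same_edge a b c d -> same_edge (f a) (f b) (f c) (f d).
Proof. by case=> [[-> ->]|[-> ->]]; [left|right]. Qed.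

Lemma same_edge_inj (T U : eqType) (A : {pred T}) (f : T -> U) (a b c d : T) :
  {in A &, injective f} -> a \in A -> b \in A -> c \in A -> d \in A ->
  same_edge (f a) (f b) (f c) (f d) -> same_edge a b c d.
Proof.
by move=> f_inj Aa Ab Ac Ad [[ac bd]|[ad bc]]; [left|right]; split; apply: f_inj.
Qed.

Section Cycle8Edges.

Variables (n : nat) (v : 'I_8 -> 'I_n).
Hypothesis v_inj : injective v.

Lemma card_cycle8_edges : #|cycle8_edges v| = 8.
Proof.
rewrite card_imset ?card_ord // => x y /eqP/eq_set2P[[/v_inj //]|[/v_inj ex /v_inj ey]].
have : ordS (ordS y) != y by case: y {ex ey} => [[|[|[|[|[|[|[|[|]]]]]]]]].
by rewrite -ex ey eqxx.
Qed.

Lemma cycle8_edges_sub : cycle8_edges v \subset Kn_edges n.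
Proof.
apply/subsetP=> _ /imsetP[x _ ->]; rewrite inE cards2 (inj_eq v_inj).
by case: x => [[|[|[|[|[|[|[|[|]]]]]]]]].
Qed.

End Cycle8Edges.

Lemma vertices_cycle8_edges n (v : 'I_8 -> 'I_n) :
  vertices (cycle8_edges v) = [set v x | x : 'I_8].
Proof.
apply/setP=> u; apply/bigcupP/imsetP=> [[_ /imsetP[x _ ->]] /set2P[]->|[x _ ->]].
- by exists x.
- by exists (ordS x).
- by exists [set v x; v (ordS x)]; [apply: imset_f | apply: set21].
Qed.

Lemma card_Kn_edges n : #|Kn_edges n| = 'C(n, 2).
Proof. by rewrite card_draws card_ord. Qed.

Lemma leave_card_mod8 n (Q : {set edge_set n}) :
  is_8packing Q -> #|leave Q| = 'C(n, 2) %[mod 8].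
Proof.
case=> Q8 Qdisj.
have Qtriv : trivIset Q by apply/trivIsetP=> A B AQ BQ; apply: Qdisj.
have [covQ_sub card_covQ] : cover Q \subset Kn_edges n /\ #|cover Q| = 8 * #|Q|.
  split; first by apply/bigcupsP=> C /Q8[v [v_inj ->]]; apply: cycle8_edges_sub.
  rewrite -(eqP Qtriv) mulnC -sum_nat_const; apply: eq_bigr => C /Q8[v [v_inj ->]].
  exact: card_cycle8_edges.
have := subset_leq_card covQ_sub.
rewrite /leave cardsD (setIidPr covQ_sub) -/(cover Q) card_covQ card_Kn_edges => le_covQ.
by rewrite {2}(_ : 'C(n, 2) = #|Q| * 8 + ('C(n, 2) - 8 * #|Q|)) ?modnMDl //; lia.
Qed.

Lemma leave_card_ge n (Q : {set edge_set n}) :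
  is_8packing Q -> 'C(n, 2) %% 8 <= #|leave Q|.
Proof. by move/leave_card_mod8 <-; apply: leq_mod. Qed.

Section CyclePairFamily.

Variables (n : nat) (I : finType) (cyc : bool -> I -> 'I_8 -> 'I_n) (L : edge_set n).

Let C s i := cycle8_edges (cyc s i).
Let P s : {set edge_set n} := [set C s i | i : I].

Hypothesis cyc_inj : forall s i, injective (cyc s i).
Hypothesis cyc_disjoint : forall s i j, i != j -> [disjoint C s i & C s j].
Hypothesis cyc_disjoint_swap : forall i, [disjoint C false i & C true i].
Hypothesis cyc_vertices :
  forall i, [set cyc false i x | x : 'I_8] = [set cyc true i x | x : 'I_8].
Hypothesis cyc_cover :
  forall s e, e \in Kn_edges n -> e \notin L -> exists i, e \in C s i.
Hypothesis leave_min : forall Q : {set edge_set n}, is_8packing Q -> #|L| <= #|leave Q|.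

Lemma cyc_edges_inj s : injective (C s).
Proof.
move=> i j Cij; apply/eqP; apply: contraT => neq_ij.
have := cyc_disjoint s neq_ij; rewrite Cij -setI_eq0 setIid => /eqP C0.
have : #|C s j| = 8 by apply: card_cycle8_edges.
by rewrite C0 cards0.
Qed.

Lemma family_packing s : is_8packing (P s).
Proof.
split=> [_ /imsetP[i _ ->]|_ _ /imsetP[i _ ->] /imsetP[j _ ->] neq_ij].
- by exists (cyc s i).
- by apply: cyc_disjoint; apply: contraNneq neq_ij => ->.
Qed.

Lemma family_leave s : leave (P s) = L.
Proof.
have sub_L : leave (P s) \subset L.
  apply/subsetP=> e; rewrite inE => /andP[e_out eK]; apply: contraNT e_out => eL.
  by have [i ei] := cyc_cover s eK eL; apply/bigcupP; exists (C s i) => //; apply: imset_f.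
by apply/eqP; rewrite eqEcard sub_L leave_min //; apply: family_packing.
Qed.

Theorem family_max_almost_2perfect :
  exists P : {set edge_set n}, is_max_8packing P /\ almost_2perfect P.
Proof.
pose f X := if [pick i | C false i == X] is Some i then C true i else X.
have fC i : f (C false i) = C true i.
  rewrite /f; case: pickP => [j /eqP/cyc_edges_inj -> //|/(_ i)].
  by rewrite eqxx.
have fP : f @: P false = P true by rewrite -imset_comp; apply: eq_imset.
exists (P false); split.
  by split=> [|Q Qpack]; [apply: family_packing | rewrite family_leave leave_min].
exists f; split; [|split; [|split]].
- move=> _ /imsetP[i _ ->]; rewrite fC; split; first by exists (cyc true i).
  by rewrite !vertices_cycle8_edges cyc_vertices; split.
- move=> _ _ /imsetP[i _ ->] /imsetP[j _ ->] neq_ij; rewrite !fC.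
  by apply: cyc_disjoint; apply: contraNneq neq_ij => ->.
- by rewrite fP; apply: family_packing.
- by rewrite fP !family_leave.
Qed.

End CyclePairFamily.

Definition next8 (x : nat) := x.+1 %% 8.

Lemma next8_lt x : next8 x < 8.
Proof. exact: ltn_pmod. Qed.

Definition same_edgeb (a b c d : nat) := ((a == c) && (b == d)) || ((a == d) && (b == c)).

Lemma same_edgeP a b c d : reflect (same_edge a b c d) (same_edgeb a b c d).
Proof.
by apply: (iffP orP) => [[]/andP[/eqP-> /eqP->]|[[-> ->]|[-> ->]]]; rewrite ?eqxx;
  [left|right|left|right].
Qed.

Definition has_edge (c : seq nat) (y z : nat) :=
  has (fun x => same_edgeb (nth 0 c x) (nth 0 c (next8 x)) y z) (iota 0 8).

Lemma has_edgeP c y z :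
  reflect (exists2 x, x < 8 & same_edge (nth 0 c x) (nth 0 c (next8 x)) y z)
          (has_edge c y z).
Proof.
apply: (iffP hasP) => [[x]|[x lt_x8 /same_edgeP]]; last by exists x; rewrite ?mem_iota.
by rewrite mem_iota => lt_x8 /same_edgeP; exists x.
Qed.

Definition share_edge (c d : seq nat) :=
  has (fun x => has_edge d (nth 0 c x) (nth 0 c (next8 x))) (iota 0 8).

Definition edge_disjoint (c d : seq nat) := forall x y, x < 8 -> y < 8 ->
  ~ same_edge (nth 0 c x) (nth 0 c (next8 x)) (nth 0 d y) (nth 0 d (next8 y)).

Lemma edge_disjointC c d : edge_disjoint c d -> edge_disjoint d c.
Proof. by move=> cd x y lt_x8 lt_y8 xy; apply: (cd y x) => //; apply: same_edge_sym. Qed.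

Lemma share_edgePn c d : ~~ share_edge c d -> edge_disjoint c d.
Proof.
move=> /hasPn cd x y lt_x8 lt_y8 xy; have := cd x; rewrite mem_iota lt_x8 => /(_ isT).
by case/has_edgeP; exists y => //; apply: same_edge_sym.
Qed.

Definition cycle_on (q : nat) (c : seq nat) := [&& size c == 8, uniq c & all (gtn q) c].

Definition design (q : nat) (E : seq (nat * nat)) (T : seq (seq nat)) :=
  [&& all (cycle_on q) T, pairwise (fun c d => ~~ share_edge c d) T
    & all (fun e => has (fun c => has_edge c e.1 e.2) T) E].

(* T' supplies an inside 8-cycle for every cycle of T. *)
Definition twin_designs q E (T T' : seq (seq nat)) :=
  [&& design q E T, design q E T'
    & all2 (fun c c' => ~~ share_edge c c' && perm_eq c c') T T'].

Lemma all2_nth (A B : Type) (a0 : A) (b0 : B) (r : A -> B -> bool) s t i :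
  all2 r s t -> i < size s -> r (nth a0 s i) (nth b0 t i).
Proof. by elim: s t i => [|a s IHs] [|b t] [|i] //= /andP[rab rst]; [|exact: IHs]. Qed.

Section TwinDesigns.

Variables (q : nat) (E : seq (nat * nat)) (T T' : seq (seq nat)).
Hypothesis twins : twin_designs q E T T'.

Let D (s : bool) := if s then T' else T.

Lemma twin_size s : size (D s) = size T.
Proof.
by case: s => //; case/and3P: twins => _ _; rewrite all2E => /andP[/eqP->].
Qed.

Lemma twin_cycle_on s t : t < size T ->
  [/\ size (nth [::] (D s) t) = 8, uniq (nth [::] (D s) t)
    & forall x, x < 8 -> nth 0 (nth [::] (D s) t) x < q].
Proof.
move=> lt_t; have /and3P[/all_nthP onT _ _] : design q E (D s).
  by case/and3P: twins; case: s.
have /and3P[/eqP size8 uniq_c /allP lt_q] := onT [::] t ltac:(by rewrite twin_size).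
by split=> // x lt_x8; apply: lt_q; rewrite mem_nth ?size8.
Qed.

Lemma twin_disjoint s s' t t' : t < size T -> t' < size T -> (s == s') != (t == t') ->
  edge_disjoint (nth [::] (D s) t) (nth [::] (D s') t').
Proof.
move=> lt_t lt_t'; case: (eqVneq t t') => [<-|neq_tt'].
  case/and3P: twins => _ _ /(all2_nth [::] [::]) /(_ lt_t) /andP[/share_edgePn disj _].
  by case: s; case: s' => //= ?; first [exact: disj | exact: edge_disjointC | by []].
case: (eqVneq s s') => //= <- _.
have /and3P[_ /(pairwiseP [::]) pw _] : design q E (D s).
  by case/and3P: twins; case: s.
rewrite -(twin_size s) in lt_t lt_t'.
case: (ltngtP t t') neq_tt' => // [lt_tt'|lt_t't] _.
  by apply/share_edgePn/pw.
by apply/edge_disjointC/share_edgePn/pw.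
Qed.

Lemma twin_cover s y z : (y, z) \in E ->
  exists2 t, t < size T &
  exists2 x, x < 8 &
  same_edge (nth 0 (nth [::] (D s) t) x) (nth 0 (nth [::] (D s) t) (next8 x)) y z.
Proof.
have /and3P[_ _ /allP cov] : design q E (D s) by case/and3P: twins; case: s.
move=> /cov /(has_nthP [::]) [t lt_t /has_edgeP edge_t].
by exists t; rewrite -?(twin_size s).
Qed.

Lemma twin_perm t : t < size T -> perm_eq (nth [::] T t) (nth [::] T' t).
Proof. by case/and3P: twins => _ _ /(all2_nth [::] [::]) tw /tw /andP[]. Qed.

End TwinDesigns.

Definition complete_edges_but (q : nat) (L : seq (nat * nat)) :=
  [seq e <- [seq (y, z) | y <- iota 0 q, z <- iota 0 q] | (e.1 < e.2) && (e \notin L)].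

Definition bipartite_edges44 := [seq (y, z) | y <- iota 0 4, z <- iota 4 4].

Definition crossing44 (c : seq nat) :=
  all (fun x => (nth 0 c x < 4) != (nth 0 c (next8 x) < 4)) (iota 0 8).

Lemma mem_complete_edges_but q L y z :
  y < z < q -> (y, z) \notin L -> (y, z) \in complete_edges_but q L.
Proof.
move=> /andP[lt_yz lt_zq] yzL; rewrite mem_filter /= lt_yz yzL.
by apply/allpairsP; exists (y, z); rewrite !mem_iota /= (ltn_trans lt_yz lt_zq) lt_zq.
Qed.

Lemma mem_bipartite_edges44 y z : y < 4 -> 4 <= z < 8 -> (y, z) \in bipartite_edges44.
Proof. by move=> lt_y4 z48; apply/allpairsP; exists (y, z); rewrite !mem_iota lt_y4. Qed.

Lemma crossing44P c x : crossing44 c -> x < 8 -> (nth 0 c x < 4) != (nth 0 c (next8 x) < 4).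
Proof. by move=> /allP cr lt_x8; apply: cr; rewrite mem_iota. Qed.

Definition leave13 : seq (nat * nat) := [:: (0, 2); (0, 6); (1, 11); (1, 12); (2, 11); (6, 12)].

Definition design13 : seq (seq nat) :=
 [:: [:: 0; 9; 4; 2; 6; 8; 10; 3];  [:: 6; 10; 1; 2; 12; 3; 11; 7];
     [:: 6; 11; 0; 10; 9; 8; 4; 1]; [:: 6; 9; 1; 5; 3; 2; 10; 4];
     [:: 6; 5; 0; 8; 2; 7; 1; 3];   [:: 1; 0; 12; 4; 5; 9; 7; 8];
     [:: 0; 7; 12; 9; 2; 5; 11; 4]; [:: 4; 3; 8; 5; 12; 11; 10; 7];
     [:: 9; 11; 8; 12; 10; 5; 7; 3]].

Definition design13' : seq (seq nat) :=
 [:: [:: 0; 4; 3; 6; 9; 8; 2; 10]; [:: 1; 3; 2; 7; 10; 12; 11; 6];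
     [:: 0; 1; 9; 11; 4; 6; 10; 8]; [:: 1; 4; 5; 6; 2; 9; 3; 10];
     [:: 0; 3; 5; 2; 1; 8; 6; 7];   [:: 0; 5; 1; 7; 4; 8; 12; 9];
     [:: 0; 11; 7; 5; 9; 4; 2; 12]; [:: 3; 7; 8; 11; 5; 10; 4; 12];
     [:: 3; 8; 5; 12; 7; 9; 10; 11]].

Definition cyclic_development (q : nat) (c : seq nat) : seq (seq nat) :=
  [seq [seq (x + t) %% q | x <- c] | t <- iota 0 q].

Definition design17 := cyclic_development 17 [:: 0; 3; 1; 5; 4; 10; 2; 7].
Definition design17' := cyclic_development 17 [:: 0; 5; 2; 4; 3; 7; 1; 10].

Definition design44 : seq (seq nat) :=
  [:: [:: 0; 4; 1; 5; 2; 6; 3; 7]; [:: 0; 5; 3; 4; 2; 7; 1; 6]].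
Definition design44' := rev design44.

Lemma twin_designs13 : twin_designs 13 (complete_edges_but 13 leave13) design13 design13'.
Proof. by vm_compute. Qed.

Lemma twin_designs17 : twin_designs 17 (complete_edges_but 17 [::]) design17 design17'.
Proof. by vm_compute. Qed.

Lemma twin_designs44 : twin_designs 8 bipartite_edges44 design44 design44'.
Proof. by vm_compute. Qed.

Lemma crossing_designs44 : all crossing44 design44 && all crossing44 design44'.
Proof. by vm_compute. Qed.

Definition block (x : nat) := x.-1 %/ 4.
Definition block_group (b : nat) := if b < 3 then 0 else (b - 3) %/ 4 + 1.
Definition group (x : nat) := block_group (block x).

Inductive piece := Group of nat | Bipartite of nat & nat.

Definition piece_of (a b : nat) : piece :=
  if (minn a b == 0) || (group (minn a b) == group (maxn a b)) then Group (group (maxn a b))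
  else Bipartite (block (minn a b)) (block (maxn a b)).

(* Local vertex 0 of a group is vertex 0; local vertices 0-3 and 4-7 of Bipartite b b'
   are blocks b and b'. *)
Definition embed (p : piece) (y : nat) : nat :=
  match p with
  | Group j => if (j == 0) || (y == 0) then y else 16 * j - 4 + y
  | Bipartite b b' => if y < 4 then 4 * b + y.+1 else 4 * b' + y - 3
  end.

Definition piece_order (p : piece) : nat :=
  match p with Group 0 => 13 | Group _ => 17 | Bipartite _ _ => 8 end.

Definition piece_ok (k : nat) (p : piece) : bool :=
  match p with
  | Group j => j <= k
  | Bipartite b b' => [&& b < b', b' < 4 * k + 3 & block_group b != block_group b']
  end.

Lemma piece_ofC a b : piece_of a b = piece_of b a.
Proof. by rewrite /piece_of minnC maxnC. Qed.

Lemma embed_lt k p y : piece_ok k p -> y < piece_order p -> embed p y < 13 + 16 * k.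
Proof.
case: p => [[|j]|b b'] /=; first lia.
  by repeat case: ifP => ?; lia.
by case/and3P=> lt_bb' lt_b' _; repeat case: ifP => ?; lia.
Qed.

Lemma embed_inj k p : piece_ok k p -> {in gtn (piece_order p) &, injective (embed p)}.
Proof.
move=> ok_p y z; rewrite !inE.
case: p ok_p => [[|j]|b b'] /=; first by [].
  by repeat case: ifP => ?; lia.
by case/and3P=> lt_bb' _ _; repeat case: ifP => ?; lia.
Qed.

Lemma piece_of_le a b : a <= b -> piece_of a b =
  if (a == 0) || (group a == group b) then Group (group b) else Bipartite (block a) (block b).
Proof. by move=> le_ab; rewrite /piece_of (minn_idPl le_ab) (maxn_idPr le_ab). Qed.

Lemma group_eq0 x : (group x == 0) = (x < 13).
Proof. by rewrite /group /block_group /block; case: ifP; lia. Qed.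

Lemma group_small x : x < 13 -> group x = 0.
Proof. by rewrite -group_eq0 => /eqP. Qed.

Lemma group_bounds x : 0 < group x -> 16 * group x - 3 <= x <= 16 * group x + 12.
Proof. by rewrite /group /block_group /block; case: ifP; lia. Qed.

Lemma group_le k x : x < 13 + 16 * k -> group x <= k.
Proof. by rewrite /group /block_group /block; case: ifP; lia. Qed.

Lemma group_shift j y : 0 < j -> 0 < y < 17 -> group (16 * j - 4 + y) = j.
Proof. by rewrite /group /block_group /block => j_gt0 y_bd; rewrite ifF; lia. Qed.

Lemma block_shift b y : y < 4 -> block (4 * b + y.+1) = b.
Proof. by rewrite /block; lia. Qed.

Lemma piece_of_embed_group j y z : y != z -> y < piece_order (Group j) ->
  z < piece_order (Group j) -> piece_of (embed (Group j) y) (embed (Group j) z) = Group j.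
Proof.
move=> neq_yz lt_y lt_z; wlog lt_yz : y z neq_yz lt_y lt_z / y < z.
  move=> W; have [lt_yz|] := ltnP y z; first exact: W.
  rewrite leq_eqVlt eq_sym (negbTE neq_yz) piece_ofC => lt_zy.
  by apply: W; rewrite // eq_sym.
case: j lt_y lt_z => [|j] /= lt_y lt_z.
  by rewrite piece_of_le ?(ltnW lt_yz) // (group_small lt_y) (group_small lt_z) eqxx orbT.
have /negbTE -> : z != 0 by rewrite -lt0n (leq_ltn_trans _ lt_yz).
have [-> /=|y_gt0] := posnP y.
  by rewrite piece_of_le // eqxx /= group_shift //; lia.
rewrite piece_of_le; last lia.
by rewrite !group_shift ?eqxx ?orbT //; lia.
Qed.

Lemma piece_of_embed_bipartite b b' y z : b < b' -> block_group b != block_group b' ->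
  (y < 4) != (z < 4) -> y < 8 -> z < 8 ->
  piece_of (embed (Bipartite b b') y) (embed (Bipartite b b') z) = Bipartite b b'.
Proof.
move=> lt_bb' neq_g; wlog lt_y4 : y z / y < 4.
  move=> W; case/orP: (orbN (y < 4)) => [|/negbTE y4F]; first exact: W.
  rewrite y4F piece_ofC => z4 lt_y8 lt_z8.
  by apply: W; rewrite ?y4F //; case: (z < 4) z4.
rewrite lt_y4 => z4 _ lt_z8; have z4F : (z < 4) = false by case: (z < 4) z4.
have -> : embed (Bipartite b b') z = 4 * b' + (z - 4).+1 by rewrite /= z4F; lia.
rewrite /= lt_y4 piece_of_le; last lia.
by rewrite /group !block_shift ?(negbTE neq_g) ?addnS //; lia.
Qed.

Lemma embed_group_onto a b : a < b -> (a == 0) || (group a == group b) ->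
  exists y z, [/\ y < z < piece_order (Group (group b)),
                  embed (Group (group b)) y = a & embed (Group (group b)) z = b].
Proof.
move=> lt_ab a_grp; have [gb0|gb_gt0] := posnP (group b).
  have lt_b : b < 13 by rewrite -group_eq0 gb0.
  by rewrite gb0; exists a, b; split=> //; apply/andP.
have /andP[ge_b le_b] := group_bounds gb_gt0.
have [a0|a_gt0] := posnP a.
  exists 0, (b + 4 - 16 * group b); rewrite /= (gtn_eqF gb_gt0) a0 /=.
  by case: (group b) gb_gt0 ge_b le_b => // j *; case: ifP => ?; split; lia.
move: a_grp; rewrite (gtn_eqF a_gt0) /= => /eqP ga.
have /andP[ge_a le_a] : 16 * group b - 3 <= a <= 16 * group b + 12.
  by rewrite -ga; apply: group_bounds; rewrite ga.
exists (a + 4 - 16 * group b), (b + 4 - 16 * group b); rewrite /= (gtn_eqF gb_gt0) /=.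
by case: (group b) ga gb_gt0 ge_a le_a ge_b le_b => // j *; repeat case: ifP => ?; split; lia.
Qed.

Lemma embed_bipartite_onto k a b : a < b < 13 + 16 * k -> 0 < a -> group a != group b ->
  piece_ok k (Bipartite (block a) (block b)) /\
  exists y z, [/\ y < 4, 4 <= z < 8, embed (Bipartite (block a) (block b)) y = a
                & embed (Bipartite (block a) (block b)) z = b].
Proof.
move=> /andP[lt_ab lt_b] a_gt0 neq_g; split.
  have le_blk : block a <= block b by rewrite /block; lia.
  rewrite /= neq_g andbT ltn_neqAle le_blk andbT; apply/andP; split.
    by apply: contraNneq neq_g; rewrite /group => ->.
  by rewrite /block; lia.
exists ((a - 1) %% 4), ((b - 1) %% 4 + 4); rewrite /= ltn_pmod // ifF; last lia.
by split; rewrite /block; lia.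
Qed.

Definition piece_edges (p : piece) : seq (nat * nat) :=
  match p with
  | Group 0 => complete_edges_but 13 leave13
  | Group _ => complete_edges_but 17 [::]
  | Bipartite _ _ => bipartite_edges44
  end.

Definition piece_design (p : piece) (s : bool) : seq (seq nat) :=
  match p with
  | Group 0 => if s then design13' else design13
  | Group _ => if s then design17' else design17
  | Bipartite _ _ => if s then design44' else design44
  end.

Lemma piece_designE p s :
  piece_design p s = if s then piece_design p true else piece_design p false.
Proof. by case: s. Qed.

Lemma twin_piece_designs p :
  twin_designs (piece_order p) (piece_edges p) (piece_design p false) (piece_design p true).
Proof.
by case: p => [[|j]|b b']; [apply: twin_designs13 | apply: twin_designs17 | apply: twin_designs44].
Qed.

Lemma piece_cycle_on p s t : t < size (piece_design p false) ->
  [/\ size (nth [::] (piece_design p s) t) = 8, uniq (nth [::] (piece_design p s) t)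
    & forall x, x < 8 -> nth 0 (nth [::] (piece_design p s) t) x < piece_order p].
Proof.
by move=> lt_t; have := twin_cycle_on (twin_piece_designs p) s lt_t; rewrite -piece_designE.
Qed.

Lemma piece_onto k a b : a < b < 13 + 16 * k -> (a, b) \notin leave13 ->
  exists p y z, [/\ piece_ok k p, (y, z) \in piece_edges p, embed p y = a & embed p z = b].
Proof.
move=> /andP[lt_ab lt_b] abL.
case: (boolP ((a == 0) || (group a == group b))) => [a_grp|].
  have [y [z [/andP[lt_yz lt_z] ya zb]]] := embed_group_onto lt_ab a_grp.
  exists (Group (group b)), y, z; split=> //=; first exact: group_le.
  move: lt_z ya zb; case: (group b) => [|j] /= lt_z ya zb.
    by rewrite ya zb in lt_yz lt_z *; apply: mem_complete_edges_but; rewrite ?lt_yz.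
  by apply: mem_complete_edges_but; rewrite ?lt_yz.
rewrite negb_or -lt0n => /andP[a_gt0 neq_g].
have ab_bd : a < b < 13 + 16 * k by rewrite lt_ab.
have [ok_p [y [z [lt_y4 z48 ya zb]]]] := embed_bipartite_onto ab_bd a_gt0 neq_g.
by exists (Bipartite (block a) (block b)), y, z; split=> //; apply: mem_bipartite_edges44.
Qed.

Lemma piece_of_design_edge k p s t x : piece_ok k p -> t < size (piece_design p false) ->
  x < 8 -> let c := nth [::] (piece_design p s) t in
  piece_of (embed p (nth 0 c x)) (embed p (nth 0 c (next8 x))) = p.
Proof.
move=> ok_p lt_t lt_x8 c.
have [size_c uniq_c lt_c] := piece_cycle_on s lt_t.
have neq_c : nth 0 c x != nth 0 c (next8 x).
  by rewrite nth_uniq ?size_c ?next8_lt //; case: x lt_x8 => [|[|[|[|[|[|[|[|]]]]]]]].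
case: p ok_p lt_t @c size_c uniq_c lt_c neq_c => [j|b b'] ok_p lt_t c _ _ lt_c neq_c.
  by apply: piece_of_embed_group; rewrite ?lt_c ?next8_lt.
case/and3P: ok_p => lt_bb' _ neq_g; apply: piece_of_embed_bipartite; rewrite ?lt_c ?next8_lt //.
apply: crossing44P => //; case/andP: crossing_designs44 => /all_nthP cr /all_nthP cr'.
by rewrite /c; case: s {c lt_c neq_c} => /=; [apply: cr'; rewrite size_rev | apply: cr].
Qed.

Section Construction.

Variable k : nat.

Local Notation n := (12 + 16 * k).+1.

Definition raw_index := ('I_k.+1 * 'I_17 + 'I_(4 * k + 3) * 'I_(4 * k + 3) * 'I_2)%type.

Definition index_piece (i : raw_index) : piece :=
  match i with inl (j, _) => Group j | inr (b, b', _) => Bipartite b b' end.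

Definition index_cycle (i : raw_index) : nat :=
  match i with inl (_, t) => t | inr (_, _, t) => t end.

Definition index_ok (i : raw_index) : bool :=
  piece_ok k (index_piece i) && (index_cycle i < size (piece_design (index_piece i) false)).

Definition global_vertex (s : bool) (i : raw_index) (x : nat) : nat :=
  embed (index_piece i) (nth 0 (nth [::] (piece_design (index_piece i) s) (index_cycle i)) x).

Lemma index_inj i j : index_piece i = index_piece j -> index_cycle i = index_cycle j -> i = j.
Proof.
case: i j => [[j1 t1]|[[b1 b1'] t1]] [[j2 t2]|[[b2 b2'] t2]] //= [].
  by move=> /val_inj-> /val_inj->.
by move=> /val_inj-> /val_inj-> /val_inj->.
Qed.

Lemma piece_index p t : piece_ok k p -> t < size (piece_design p false) ->
  exists i, [/\ index_ok i, index_piece i = p & index_cycle i = t].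
Proof.
case: p => [j|b b'] ok_p lt_t.
  have lt_t17 : t < 17 by case: j {ok_p} lt_t => [|[|j]] /= /leq_trans->.
  by exists (inl (Ordinal (ok_p : j < k.+1), Ordinal lt_t17)); split=> //; apply/andP.
case/and3P: (ok_p) => lt_bb' lt_b' _.
exists (inr (Ordinal (ltn_trans lt_bb' lt_b'), Ordinal lt_b', Ordinal (lt_t : t < 2))).
by split=> //; apply/andP.
Qed.

Section ValidIndex.

Variables (s : bool) (i : raw_index).
Hypothesis ok_i : index_ok i.

Let p := index_piece i.
Let c := nth [::] (piece_design p s) (index_cycle i).

Let ok_p : piece_ok k p. Proof. by case/andP: ok_i. Qed.
Let lt_t : index_cycle i < size (piece_design p false). Proof. by case/andP: ok_i. Qed.

Let c_on : [/\ size c = 8, uniq c & forall x, x < 8 -> nth 0 c x < piece_order p].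
Proof. exact: piece_cycle_on. Qed.

Lemma global_vertex_lt x : x < 8 -> global_vertex s i x < n.
Proof. by case: c_on => _ _ lt_c /lt_c; apply: embed_lt ok_p. Qed.

Lemma global_vertex_inj : {in gtn 8 &, injective (global_vertex s i)}.
Proof.
case: c_on => size_c uniq_c lt_c x y; rewrite !inE => lt_x8 lt_y8.
move/(embed_inj ok_p); rewrite !inE !lt_c // => /(_ isT isT) /eqP.
by rewrite nth_uniq ?size_c // => /eqP.
Qed.

Lemma piece_of_global_edge x : x < 8 ->
  piece_of (global_vertex s i x) (global_vertex s i (next8 x)) = p.
Proof. exact: piece_of_design_edge ok_p lt_t. Qed.

Lemma global_vertex_twin x : x < 8 ->
  exists2 y, y < 8 & global_vertex (~~ s) i y = global_vertex s i x.
Proof.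
case: c_on => size_c _ _ lt_x8.
have c'_size : size (nth [::] (piece_design p (~~ s)) (index_cycle i)) = 8.
  by case: (piece_cycle_on (~~ s) lt_t).
have perm_cc' : perm_eq c (nth [::] (piece_design p (~~ s)) (index_cycle i)).
  have := twin_perm (twin_piece_designs p) lt_t.
  by rewrite /c; case: (s) => //=; rewrite perm_sym.
have : nth 0 c x \in nth [::] (piece_design p (~~ s)) (index_cycle i).
  by rewrite -(perm_mem perm_cc') mem_nth ?size_c.
move=> cx_in; exists (index (nth 0 c x) (nth [::] (piece_design p (~~ s)) (index_cycle i))).
  by rewrite -c'_size index_mem.
by rewrite /global_vertex nth_index.
Qed.

End ValidIndex.

Lemma global_edges_disjoint s s' i j x y : index_ok i -> index_ok j ->
  (s == s') != (i == j) -> x < 8 -> y < 8 ->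
  ~ same_edge (global_vertex s i x) (global_vertex s i (next8 x))
              (global_vertex s' j y) (global_vertex s' j (next8 y)).
Proof.
move=> ok_i ok_j neq_sij lt_x8 lt_y8 shared.
(* an edge determines its piece, so both cycles come from the same local design *)
have pij : index_piece i = index_piece j.
  rewrite -(piece_of_global_edge s ok_i lt_x8) -(piece_of_global_edge s' ok_j lt_y8).
  by case: shared => [[-> ->]|[-> ->]]; rewrite // piece_ofC.
have /andP[ok_p lt_ti] := ok_i; have /andP[_ lt_tj] := ok_j; rewrite pij in ok_p lt_ti.
have tw := twin_piece_designs (index_piece j).
have neq_st : (s == s') != (index_cycle i == index_cycle j).
  suff -> : (index_cycle i == index_cycle j) = (i == j) by [].
  by apply/eqP/eqP => [/(index_inj pij)|->].
apply: (twin_disjoint tw lt_ti lt_tj neq_st lt_x8 lt_y8).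
have lt_c s1 t z : t < size (piece_design (index_piece j) false) -> z < 8 ->
    nth 0 (nth [::] (piece_design (index_piece j) s1) t) z < piece_order (index_piece j).
  by move=> lt_t; case: (piece_cycle_on s1 lt_t) => _ _; apply.
rewrite -!piece_designE; apply: (same_edge_inj (embed_inj ok_p)); rewrite ?inE ?lt_c ?next8_lt //.
by rewrite /global_vertex pij in shared.
Qed.

Lemma global_edges_cover s a b : a < b < n -> (a, b) \notin leave13 ->
  exists2 i, index_ok i &
  exists2 x, x < 8 & same_edge (global_vertex s i x) (global_vertex s i (next8 x)) a b.
Proof.
move=> ab_bd abL; have [p [y [z [ok_p yz_in ya zb]]]] := piece_onto ab_bd abL.
have [t lt_t [x lt_x8 xe]] := twin_cover (twin_piece_designs p) s yz_in.
have [i [ok_i pi ti]] := piece_index ok_p lt_t.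
exists i => //; exists x => //; rewrite /global_vertex pi ti -ya -zb piece_designE.
exact: same_edge_map.
Qed.

Definition cycle_index := {i : raw_index | index_ok i}.

Definition global_cycle (s : bool) (i : cycle_index) (x : 'I_8) : 'I_n :=
  inord (global_vertex s (val i) x).

Definition global_leave : edge_set n := [set:: [seq [set inord e.1; inord e.2] | e <- leave13]].

Lemma global_cycle_val s i x : val (global_cycle s i x) = global_vertex s (val i) x.
Proof. by rewrite /global_cycle /= inordK // global_vertex_lt ?(valP i). Qed.

Lemma global_cycle_inj s i : injective (global_cycle s i).
Proof.
move=> x y /(congr1 val); rewrite !global_cycle_val => /(global_vertex_inj (valP i)).
by rewrite !inE => /(_ (ltn_ord x) (ltn_ord y)) /val_inj.
Qed.

Lemma global_cycle_disjoint s s' i j : (s == s') != (i == j) ->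
  [disjoint cycle8_edges (global_cycle s i) & cycle8_edges (global_cycle s' j)].
Proof.
rewrite -val_eqE => neq_sij; rewrite disjoint_subset; apply/subsetP=> _ /imsetP[x _ ->].
rewrite inE; apply/imsetP=> -[y _ /eqP/eq_set2P/(same_edge_map val)].
rewrite !global_cycle_val.
exact: global_edges_disjoint (valP i) (valP j) neq_sij (ltn_ord x) (ltn_ord y).
Qed.

Lemma global_cycle_vertices i :
  [set global_cycle false i x | x : 'I_8] = [set global_cycle true i x | x : 'I_8].
Proof.
have twin s (x : 'I_8) : exists y : 'I_8, global_cycle (~~ s) i y = global_cycle s i x.
  have [y lt_y8 e] := global_vertex_twin s (valP i) (ltn_ord x).
  by exists (Ordinal lt_y8); apply: val_inj; rewrite !global_cycle_val.
apply/setP=> v; apply/imsetP/imsetP=> -[x _ ->].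
  by have [y e] := twin false x; exists y.
by have [y e] := twin true x; exists y.
Qed.

Lemma global_cycle_cover s e : e \in Kn_edges n -> e \notin global_leave ->
  exists i, e \in cycle8_edges (global_cycle s i).
Proof.
rewrite inE => /cards2P[u [w [neq_uw ->]]].
wlog lt_uw : u w neq_uw / val u < val w.
  move=> W; case: (ltngtP (val u) (val w)) => [|lt_wu|/val_inj eq_uw]; first exact: W.
    by rewrite setUC; apply: W; rewrite // eq_sym.
  by rewrite eq_uw eqxx in neq_uw.
move=> uw_out.
have uwL : (val u, val w) \notin leave13.
  apply: contra uw_out => uwL; rewrite inE.
  by apply/mapP; exists (val u, val w); rewrite //= !inord_val.
have uw_bd : val u < val w < n by rewrite lt_uw ltn_ord.
have [i ok_i [x lt_x8 shared]] := global_edges_cover s uw_bd uwL.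
exists (exist _ i ok_i); apply/imsetP; exists (Ordinal lt_x8) => //.
apply/eqP/eq_set2P/(same_edge_inj (A := predT) (in2W val_inj)) => //.
by rewrite /= !global_cycle_val; apply: same_edge_sym.
Qed.

Lemma binomial2_mod8 : 'C(n, 2) %% 8 = 6.
Proof.
rewrite bin2 (_ : _ * _ = (6 + (9 + 25 * k + 16 * k * k) * 8).*2); last by rewrite -addnn /=; nia.
by rewrite doubleK addnC modnMDl.
Qed.

Lemma global_leave_min (Q : {set edge_set n}) :
  is_8packing Q -> #|global_leave| <= #|leave Q|.
Proof.
move/leave_card_ge; rewrite binomial2_mod8; apply: leq_trans.
by rewrite cardsE (leq_trans (card_size _)) ?size_map.
Qed.

Theorem max_almost_2perfect_packing :
  exists P : {set edge_set n}, is_max_8packing P /\ almost_2perfect P.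
Proof.
apply: (@family_max_almost_2perfect _ _ global_cycle global_leave).
- exact: global_cycle_inj.
- by move=> s i j neq_ij; apply: global_cycle_disjoint; rewrite eqxx (negbTE neq_ij).
- by move=> i; apply: global_cycle_disjoint; rewrite eqxx.
- exact: global_cycle_vertices.
- exact: global_cycle_cover.
- exact: global_leave_min.
Qed.

End Construction.

Theorem lemma3p7 (n : nat) :
  13 <= n -> n %% 16 = 13 ->
  exists P : {set edge_set n}, is_max_8packing P /\ almost_2perfect P.
Proof.
move=> n_ge13 n_mod16; have -> : n = (12 + 16 * (n %/ 16)).+1 by lia.
exact: max_almost_2perfect_packing.
Qed.
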